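(* If $\ell\ge 5$ is divisible by three, then the uniform Tur\'an density of the tight $3$-uniform cycle $C_\ell^{(3)}$ is equal to zero.
   Context: For $\ell\ge 5$, the tight $3$-uniform cycle $C_\ell^{(3)}$ is the $3$-uniform hypergraph with $\ell$ vertices $v_1,\ldots,v_\ell$ whose edges are exactly the triples $\{v_i,v_{i+1},v_{i+2}\}$, $i\in[\ell]$, indices modulo $\ell$. For an $n$-vertex $3$-uniform hypergraph $H$ and $\varepsilon>0$, the $\varepsilon$-linear density of $H$ is the minimum edge density of an induced subhypergraph of $H$ with at least $\varepsilon n$ vertices. The uniform Tur\'an density of a $3$-uniform hypergraph $F$ is the supremum of all $d\in[0,1]$ such that for every $\varepsilon>0$ there exist arbitrarily large $F$-free $3$-uniform hypergraphs with $\varepsilon$-linear density at least $d$. *)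

From HB Require Import structures.
From mathcomp Require Import all_boot all_order all_algebra.
From mathcomp Require Import boolp classical_sets reals.
Set Implicit Arguments. Unset Strict Implicit. Unset Printing Implicit Defensive.
Import Order.TTheory GRing.Theory Num.Theory.

Definition hgraph (n : nat) := {set {set 'I_n}}.

Definition uniform3 (n : nat) (E : hgraph n) : Prop :=
  forall e, e \in E -> #|e| = 3.

Definition contains (n : nat) (H : hgraph n) (m : nat) (F : hgraph m) : Prop :=
  exists f : 'I_m -> 'I_n, injective f /\ forall e, e \in F -> f @: e \in H.

Definition free (m : nat) (F : hgraph m) (n : nat) (H : hgraph n) : Prop :=
  ~ contains H F.

(* Tight 3-uniform cycle on vertices v_0,...,v_{l-1}:
   edges {v_i, v_{i+1}, v_{i+2}}, indices mod l (ordS = cyclic successor). *)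
Definition tight_cycle (l : nat) : hgraph l :=
  [set [set i; ordS i; ordS (ordS i)] | i : 'I_l].

(* Edge density of the induced subhypergraph H[S]:
   #(edges inside S) / C(|S|,3)  (equal to 0 when |S| < 3, by x/0 = 0). *)
Definition induced_density {R : realType} (n : nat) (H : hgraph n) (S : {set 'I_n}) : R :=
  (#|[set e in H | e \subset S]|%:R / 'C(#|S|, 3)%:R)%R.

(* The eps-linear density of H is the minimum edge density of an induced
   subhypergraph on at least eps*n vertices; "eps-linear density >= d" means
   every such induced subhypergraph has density >= d. *)
Definition eps_lin_density_ge {R : realType} (n : nat) (H : hgraph n) (eps d : R) : Prop :=
  forall S : {set 'I_n}, (eps * n%:R <= #|S|%:R)%R -> (d <= induced_density (R:=R) H S)%R.

Definition ut_admissible {R : realType} (m : nat) (F : hgraph m) (d : R) : Prop :=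
  (0 <= d <= 1)%R /\
  forall eps : R, (0 < eps)%R ->
    forall N : nat, exists n : nat, exists H : hgraph n,
      (N <= n)%N /\ uniform3 H /\ free F H /\ eps_lin_density_ge H eps d.

Definition uniform_turan_density (R : realType) (m : nat) (F : hgraph m) : R :=
  sup [set d : R | ut_admissible F d].

(* A tight cycle of length 3k is 3-partite: colouring v_i by i mod 3 makes every edge
   rainbow, so C_3k is a subgraph of the complete 3-partite 3-graph K(k,k,k).  By
   Erdos' theorem every large 3-graph with at least C(n,3)/q edges contains K(k,k,k);
   we prove it by two rounds of Kovari-Sos-Turan double counting, first finding k
   vertices C lying in the links of many pairs, then a complete bipartite K(k,k)
   among those pairs.  So a positive d is never admissible (eps = 1 already suffices),
   while d = 0 is admissible through empty hypergraphs, and the supremum is 0. *)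

From HB Require Import structures.
From mathcomp Require Import boolp classical_sets reals.
From mathcomp Require Import all_boot all_order all_algebra.
From mathcomp Require Import zify.
Set Implicit Arguments. Unset Strict Implicit. Unset Printing Implicit Defensive.
Import Order.TTheory GRing.Theory Num.Theory.

Lemma card_pairs (X Y : finType) (P : X -> Y -> bool) :
  #|[set t : X * Y | P t.1 t.2]| = \sum_x #|[set y | P x y]|.
Proof.
rewrite -sum1dep_card (eq_bigr (fun x => \sum_(y | P x y) 1)) => [|x _].
  by rewrite pair_big_dep.
by rewrite sum1dep_card.
Qed.

Lemma leq_expn2r m n e : m <= n -> m ^ e <= n ^ e.
Proof. by move=> lemn; case: e => [|e]; rewrite ?expn0 // leq_exp2r. Qed.

Lemma ffact_leq_exp n k : n ^_ k <= n ^ k.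
Proof.
elim: k => [|k IH]; first by rewrite ffactn0.
by rewrite ffactnSr expnSr leq_mul ?leq_subr.
Qed.

Lemma exp_subn_leq_ffact n k : (n - k) ^ k <= n ^_ k.
Proof.
elim: k => [|k IH]; first by rewrite ffactn0.
rewrite ffactnSr expnSr leq_mul ?leq_sub2l //.
exact: leq_trans (leq_expn2r _ (leq_sub2l _ _)) IH.
Qed.

Lemma bin_leq_bin_div a k n : 0 < a -> a * (2 * k + 1) <= n ->
  'C(n, k) <= (2 * a) ^ k * 'C(n %/ a, k).
Proof.
move=> a_gt0 le_n; set D := n %/ a.
have le_D : 2 * k + 1 <= D by rewrite leq_divRL // mulnC.
have le_nD : n <= 2 * a * (D - k).
  by have := divn_eq n a; have := ltn_pmod n a_gt0; rewrite -/D; nia.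
rewrite -(leq_pmul2r (fact_gt0 k)) -mulnA !bin_ffact.
apply: leq_trans (ffact_leq_exp n k) _.
apply: leq_trans (leq_expn2r k le_nD) _.
by rewrite expnMn leq_mul ?exp_subn_leq_ffact.
Qed.

Lemma cube_leq_bin3 n : 6 <= n -> n ^ 3 <= 48 * 'C(n, 3).
Proof.
move=> le6n; rewrite (_ : 48 = 2 ^ 3 * 3`!) // -mulnA [3`! * _]mulnC bin_ffact.
apply: leq_trans (leq_mul (leqnn _) (exp_subn_leq_ffact n 3)).
by rewrite -expnMn leq_expn2r //; lia.
Qed.

Lemma card_leq_heavy (Y : finType) (f : Y -> nat) (B c : nat) : 0 < B ->
  (forall y, f y <= B) -> #|Y| * B <= c * \sum_y f y ->
  #|Y| <= 2 * c * #|[set y | B <= 2 * c * f y]|.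
Proof.
move=> B_gt0 le_fB le_sum; set G := [set y | _].
rewrite (bigID (fun y => B <= 2 * c * f y)) /= mulnDr in le_sum.
have le_heavy : \sum_(y | B <= 2 * c * f y) f y <= #|G| * B.
  by rewrite -sum1dep_card big_distrl /=; apply: leq_sum => y _; rewrite mul1n.
have le_light : 2 * c * \sum_(y | ~~ (B <= 2 * c * f y)) f y <= #|Y| * B.
  rewrite big_distrr /=; apply: (@leq_trans (\sum_(y | ~~ (B <= 2 * c * f y)) B)).
    by apply: leq_sum => y; rewrite -ltnNge => /ltnW.
  by rewrite sum_nat_const leq_mul2r max_card orbT.
have := leq_mul (leqnn c) le_heavy; rewrite -(leq_pmul2r B_gt0).
by set m := #|Y| in le_sum le_light *; nia.
Qed.

Lemma exists_common_subset (X Y : finType) (N : Y -> {set X}) (Ys : {set Y}) k D :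
  k <= #|X| -> (forall y, y \in Ys -> D <= #|N y|) ->
  exists K : {set X}, #|K| = k /\
    #|Ys| * 'C(D, k) <= 'C(#|X|, k) * #|[set y in Ys | K \subset N y]|.
Proof.
move=> le_kX le_DN; set Ks := [set K : {set X} | #|K| == k].
pose deg (K : {set X}) := #|[set y in Ys | K \subset N y]|.
have double_count : #|Ys| * 'C(D, k) <= \sum_(K in Ks) deg K.
  rewrite /deg; under eq_bigr => K _ do rewrite -sum1dep_card.
  rewrite (exchange_big_dep (mem Ys)) => [|K y _ /andP[] //].
  rewrite -sum1_card big_distrl /=; apply: leq_sum => y Ys_y.
  rewrite mul1n sum1dep_card.
  have -> : [set K : {set X} in Ks | y \in Ys & K \subset N y] =
            [set K : {set X} | K \subset N y & #|K| == k].
    by apply/setP => K; rewrite !inE Ys_y andbC.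
  by rewrite cards_draws leq_bin2l ?le_DN.
have Ks_gt0 : 0 < #|Ks| by rewrite card_draws bin_gt0.
have [K Ks_K max_K] := eq_bigmax_cond deg Ks_gt0.
exists K; split; first by move: Ks_K; rewrite inE => /eqP.
rewrite -card_draws -/Ks; apply: leq_trans double_count _.
rewrite -[#|[set y in Ys | _]|]/(deg K) -max_K -sum1_card big_distrl /=.
by apply: leq_sum => K' Ks_K'; rewrite mul1n; apply: leq_bigmax_cond.
Qed.

(* Kovari-Sos-Turan: keep the y with |N y| >= |X| / 2c, then average over the
   k-subsets of X; [bin_leq_bin_div] bounds the loss in the binomial coefficients. *)
Lemma exists_subset_common_to_many (X Y : finType) (N : Y -> {set X}) c k :
  0 < c -> 2 * c * (2 * k + 1) <= #|X| -> #|Y| * #|X| <= c * \sum_y #|N y| ->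
  exists K : {set X}, #|K| = k /\
    #|Y| <= 2 * c * (4 * c) ^ k * #|[set y | K \subset N y]|.
Proof.
move=> c_gt0 le_X le_sum; set n := #|X| in le_X le_sum *.
have n_gt0 : 0 < n by apply: leq_trans le_X; rewrite muln_gt0 addn1 muln_gt0 c_gt0.
set Good := [set y | n <= 2 * c * #|N y|].
have le_Good : #|Y| <= 2 * c * #|Good|.
  exact: card_leq_heavy n_gt0 (fun y => max_card (mem (N y))) le_sum.
pose D := n %/ (2 * c).
have le_DN y : y \in Good -> D <= #|N y|.
  by rewrite inE => /(leq_div2r (2 * c)); rewrite mulKn // muln_gt0.
have le_kn : k <= n by nia.
have [K [card_K le_K]] := exists_common_subset le_kn le_DN.
exists K; split => //.
have C_gt0 : 0 < 'C(D, k) by rewrite bin_gt0 leq_divRL ?muln_gt0 // mulnC; nia.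
have le_bin : 'C(n, k) <= (4 * c) ^ k * 'C(D, k).
  have -> : 4 * c = 2 * (2 * c) by rewrite mulnA.
  by apply: bin_leq_bin_div; rewrite ?muln_gt0.
have le_G : #|[set y in Good | K \subset N y]| <= #|[set y | K \subset N y]|.
  by apply/subset_leq_card/subsetP => y; rewrite !inE => /andP[].
have {le_K} le_K : #|Good| <= (4 * c) ^ k * #|[set y in Good | K \subset N y]|.
  rewrite -(leq_pmul2r C_gt0); apply: leq_trans le_K _.
  by rewrite mulnAC leq_mul2r le_bin orbT.
apply: leq_trans le_Good _; rewrite -(mulnA (2 * c)) leq_mul2l; apply/orP; right.
by apply: leq_trans le_K _; rewrite leq_mul2l le_G orbT.
Qed.

Lemma dense_complete_bipartite (X Y : finType) (P : {set X * Y}) c k :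
  0 < c -> 2 * c * (2 * k + 1) <= #|Y| -> 2 * c * (4 * c) ^ k * k <= #|X| ->
  #|X| * #|Y| <= c * #|P| ->
  exists (A : {set X}) (B : {set Y}),
    [/\ #|A| = k, #|B| = k & forall a b, a \in A -> b \in B -> (a, b) \in P].
Proof.
move=> c_gt0 le_Y le_X dense; pose N (x : X) := [set y | (x, y) \in P].
have sum_N : \sum_x #|N x| = #|P|.
  rewrite -(card_pairs (fun x y => (x, y) \in P)).
  by apply: eq_card => -[x y]; rewrite !inE.
rewrite -sum_N in dense.
have [B [card_B many_B]] := exists_subset_common_to_many c_gt0 le_Y dense.
set As := [set x | B \subset N x] in many_B.
have c'_gt0 : 0 < 2 * c * (4 * c) ^ k.
  by rewrite !muln_gt0 c_gt0 expn_gt0 muln_gt0 c_gt0.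
have /card_gt0P[A] : 0 < #|[set A : {set X} | A \subset As & #|A| == k]|.
  rewrite cards_draws bin_gt0 -(leq_pmul2l c'_gt0).
  exact: leq_trans le_X many_B.
rewrite inE => /andP[/subsetP sub_A /eqP card_A]; exists A, B; split => // a b A_a B_b.
by have := sub_A a A_a; rewrite inE => /subsetP /(_ b B_b); rewrite inE.
Qed.

Lemma card3P (T : finType) (e : {set T}) :
  #|e| = 3 -> exists u v w, e = [set u; v; w].
Proof.
move=> card_e; have /card_gt0P[u e_u] : 0 < #|e| by rewrite card_e.
have /cards2P[v [w [_ e_uvw]]] : #|e :\ u| == 2.
  by move: card_e; rewrite (cardsD1 u) e_u add1n => -[->].
exists u, v, w; rewrite -(setD1K e_u) e_uvw.
by apply/setP => x; rewrite !inE orbA.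
Qed.

Lemma cards3 (T : finType) (a b c : T) :
  a != b -> a != c -> b != c -> #|[set a; b; c]| = 3.
Proof.
by move=> ab ac bc; rewrite -setUA cardsU1 cards2 bc !inE negb_or ab ac.
Qed.

Lemma exists_enum (T : finType) (S : {set T}) k : #|S| = k ->
  exists e : 'I_k -> T, injective e /\ forall j, e j \in S.
Proof.
move=> card_S; exists (fun j => enum_val (cast_ord (esym card_S) j)); split.
  by move=> i j /enum_val_inj /cast_ord_inj.
by move=> j; apply: enum_valP.
Qed.

Lemma contains_trans n m p (H : hgraph n) (G : hgraph m) (F : hgraph p) :
  contains H G -> contains G F -> contains H F.
Proof.
move=> [g [g_inj g_edge]] [f [f_inj f_edge]]; exists (g \o f); split.
  exact: inj_comp.
by move=> e F_e; rewrite imset_comp g_edge ?f_edge.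
Qed.

Lemma contains_subgraph m (F G : hgraph m) : F \subset G -> contains G F.
Proof.
by move=> /subsetP sub_FG; exists id; split => // e F_e; rewrite imset_id sub_FG.
Qed.

Lemma card_edges_leq_codegrees n (H : hgraph n) : uniform3 H ->
  #|H| <= \sum_(y : 'I_n * 'I_n) #|[set w | [set y.1; y.2; w] \in H]|.
Proof.
move=> H3; rewrite -card_pairs.
set S := [set t : ('I_n * 'I_n) * 'I_n | _].
apply: leq_trans (leq_imset_card (fun t => [set t.1.1; t.1.2; t.2]) S).
apply/subset_leq_card/subsetP => e H_e.
have [u [v [w e_uvw]]] := card3P (H3 e H_e).
by apply/imsetP; exists (u, v, w); rewrite // inE -e_uvw.
Qed.

Lemma dense_complete_tripartite q k : 0 < q -> exists N, forall n (H : hgraph n),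
  N <= n -> uniform3 H -> 'C(n, 3) <= q * #|H| ->
  exists A B C : {set 'I_n}, [/\ #|A| = k, #|B| = k, #|C| = k &
    forall a b c, a \in A -> b \in B -> c \in C -> [set a; b; c] \in H].
Proof.
move=> q_gt0; pose c1 := 48 * q; pose c2 := 2 * c1 * (4 * c1) ^ k.
have c1_gt0 : 0 < c1 by rewrite muln_gt0.
have c2_gt0 : 0 < c2 by rewrite /c2 /c1 !muln_gt0 expn_gt0 !muln_gt0 q_gt0.
exists (6 + 2 * c1 * (2 * k + 1) + 2 * c2 * (2 * k + 1) + 2 * c2 * (4 * c2) ^ k * k).
move=> n H le_Nn H3 dense; have card_n : #|'I_n| = n := card_ord n.
pose link (y : 'I_n * 'I_n) := [set w | [set y.1; y.2; w] \in H].
have dense_links : #|{: 'I_n * 'I_n}| * #|'I_n| <= c1 * \sum_y #|link y|.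
  rewrite card_prod card_n.
  have -> : n * n * n = n ^ 3 by rewrite !expnS expn0 muln1 mulnA.
  apply: leq_trans (cube_leq_bin3 _) _; first by lia.
  rewrite /c1 -mulnA leq_mul2l; apply/orP; right.
  exact: leq_trans dense (leq_mul (leqnn q) (card_edges_leq_codegrees H3)).
have le_c1n : 2 * c1 * (2 * k + 1) <= #|'I_n| by rewrite card_n; lia.
have [C [card_C many_C]] := exists_subset_common_to_many c1_gt0 le_c1n dense_links.
have [A [B [card_A card_B AB_C]]] :
    exists (A B : {set 'I_n}), [/\ #|A| = k, #|B| = k &
      forall a b, a \in A -> b \in B -> (a, b) \in [set y | C \subset link y]].
  apply: dense_complete_bipartite c2_gt0 _ _ _; rewrite ?card_n; [lia | lia |].
  by move: many_C; rewrite card_prod card_n.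
exists A, B, C; split => // a b c A_a B_b C_c.
by have := AB_C a b A_a B_b; rewrite inE => /subsetP /(_ c C_c); rewrite inE.
Qed.

(* For m = 3k this is K(k,k,k), whose parts are the residue classes modulo 3. *)
Definition complete_tripartite (m : nat) : hgraph m :=
  [set e : {set 'I_m} | (#|e| == 3) && [forall r : 'I_3, [exists x in e, x %% 3 == r]]].

Section CompleteTripartiteEmbedding.

Variables (n k : nat) (H : hgraph n) (emb : nat -> 'I_k -> 'I_n).
Hypothesis H3 : uniform3 H.
Hypothesis emb_inj : forall r, injective (emb r).
Hypothesis emb_edge : forall i j l, [set emb 0 i; emb 1 j; emb 2 l] \in H.

Lemma transversal_edge (e : {set 'I_n}) :
  #|e| <= 3 -> (forall r, r < 3 -> exists i, emb r i \in e) -> e \in H.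
Proof.
move=> le_e3 hit.
have [[i e_i] [j e_j] [l e_l]] := And3 (hit 0 isT) (hit 1 isT) (hit 2 isT).
have E_H := emb_edge i j l.
suff /eqP <- : [set emb 0 i; emb 1 j; emb 2 l] == e by [].
rewrite eqEcard (H3 E_H) le_e3 andbT.
by apply/subsetP => x; rewrite !inE => /orP[/orP[]|] /eqP->.
Qed.

Let quot3 (x : 'I_(k * 3)) : 'I_k :=
  Ordinal (etrans (ltn_divLR x k (isT : 0 < 3)) (ltn_ord x)).

Let vertex_map (x : 'I_(k * 3)) : 'I_n := emb (x %% 3) (quot3 x).

Lemma image_transversal (S : {set 'I_(k * 3)}) : #|vertex_map @: S| <= 3 ->
  (forall r, r < 3 -> exists2 x, x \in S & x %% 3 = r) -> vertex_map @: S \in H.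
Proof.
move=> le_S3 hit; apply: transversal_edge => // r /hit[x S_x <-].
by exists (quot3 x); apply: imset_f.
Qed.

Lemma vertex_map_inj : injective vertex_map.
Proof.
move=> x y eq_xy; have [eq_r | neq_r] := eqVneq (x %% 3) (y %% 3).
  have eq_q : quot3 x = quot3 y by apply: (@emb_inj (x %% 3)); rewrite {2}eq_r.
  apply: val_inj; rewrite /= (divn_eq x 3) (divn_eq y 3) eq_r.
  by rewrite -[x %/ 3]/(val (quot3 x)) eq_q.
(* Otherwise x, y and a vertex z of the third class would be sent onto an edge of
   H with at most two vertices. *)
have lt_z : 3 - x %% 3 - y %% 3 < k * 3 by have := ltn_ord x; lia.
pose z := Ordinal lt_z; pose S := [set x; y; z].
have S_H : vertex_map @: S \in H.
  apply: image_transversal => [|r lt_r3].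
    by rewrite !imsetU !imset_set1 eq_xy setUid cards2; case: (_ != _).
  have : r = x %% 3 \/ r = y %% 3 \/ r = z %% 3 by rewrite /=; lia.
  by case=> [->|[->|->]]; [exists x | exists y | exists z]; rewrite // !inE eqxx ?orbT.
have := H3 S_H; rewrite !imsetU !imset_set1 eq_xy setUid cards2.
by case: (_ != _).
Qed.

Lemma contains_complete_tripartite : contains H (complete_tripartite (k * 3)).
Proof.
exists vertex_map; split; first exact: vertex_map_inj.
move=> e; rewrite inE => /andP[/eqP card_e /forallP hit].
apply: image_transversal => [|r lt_r3].
  by rewrite (leq_trans (leq_imset_card _ _)) ?card_e.
by have /existsP[x /andP[e_x /eqP xr]] := hit (Ordinal lt_r3); exists x.
Qed.

End CompleteTripartiteEmbedding.

Lemma tight_cycle_sub_complete_tripartite k :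
  tight_cycle (k * 3) \subset complete_tripartite (k * 3).
Proof.
apply/subsetP => e /imsetP[i _ ->].
have mod_ordS (x : 'I_(k * 3)) : ordS x %% 3 = x.+1 %% 3.
  by rewrite /= modn_dvdm // dvdn_mull.
have [mod_j mod_l] := (mod_ordS i, mod_ordS (ordS i)).
have neq_mod (x y : 'I_(k * 3)) : x %% 3 != y %% 3 -> x != y.
  by apply: contraNneq => ->.
have [ne_i1 ne_i2 ne_12] :
    [/\ i != ordS i, i != ordS (ordS i) & ordS i != ordS (ordS i)].
  by split; apply: neq_mod; apply/eqP; lia.
rewrite inE cards3 //=.
apply/forallP => r; apply/existsP.
have : r = i %% 3 :> nat \/ r = ordS i %% 3 :> nat \/ r = ordS (ordS i) %% 3 :> nat.
  by have := ltn_ord r; lia.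
case=> [->|[->|->]]; [exists i | exists (ordS i) | exists (ordS (ordS i))];
  by rewrite !inE !eqxx ?orbT.
Qed.

Lemma tight_cycle_neq0 l : 0 < l -> tight_cycle l != set0.
Proof.
by move=> l_gt0; apply/set0Pn; eexists; apply: (imset_f _ (x := Ordinal l_gt0)).
Qed.

Definition zero_turan_density m (F : hgraph m) : Prop :=
  forall q, 0 < q -> exists N, forall n (H : hgraph n),
    N <= n -> uniform3 H -> 'C(n, 3) <= q * #|H| -> contains H F.

Lemma zero_turan_density_contains m p (G : hgraph m) (F : hgraph p) :
  contains G F -> zero_turan_density G -> zero_turan_density F.
Proof.
move=> G_F zero_G q /zero_G[N contains_G]; exists N => n H le_Nn H3 dense.
exact: contains_trans (contains_G n H le_Nn H3 dense) G_F.
Qed.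

Lemma zero_turan_density_complete_tripartite k :
  zero_turan_density (complete_tripartite (k * 3)).
Proof.
move=> q /(dense_complete_tripartite k)[N sets_ABC]; exists N => n H le_Nn H3 dense.
have [A [B [C [card_A card_B card_C edge_ABC]]]] := sets_ABC n H le_Nn H3 dense.
have [ea [ea_inj ea_A]] := exists_enum card_A.
have [eb [eb_inj eb_B]] := exists_enum card_B.
have [ec [ec_inj ec_C]] := exists_enum card_C.
apply: (@contains_complete_tripartite _ _ _ (fun r => nth ec [:: ea; eb] r)) => //.
  by case=> [|[|r]] /=; rewrite ?nth_nil.
by move=> i j l; apply: edge_ABC.
Qed.

Lemma zero_turan_density_tight_cycle k : zero_turan_density (tight_cycle (k * 3)).
Proof.
apply: zero_turan_density_contains (zero_turan_density_complete_tripartite k).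
exact/contains_subgraph/tight_cycle_sub_complete_tripartite.
Qed.

Lemma ut_admissible_eq0 (R : realType) m (F : hgraph m) (d : R) :
  zero_turan_density F -> ut_admissible F d -> d = 0%R.
Proof.
move=> zero_F [/andP[d_ge0 _] dense].
apply/eqP; rewrite eq_le d_ge0 andbT leNgt; apply/negP => d_gt0.
pose q := Num.Def.archi_bound d^-1.
have le_qd : (1 <= q%:R * d)%R.
  by rewrite ltW // -ltr_pdivrMr // div1r archi_boundP // invr_ge0 ltW.
have q_gt0 : 0 < q.
  by move: le_qd; rewrite lt0n; apply: contraTneq => ->; rewrite mul0r ler10.
have [N contains_F] := zero_F q q_gt0.
have [n [H [le_Nn [H3 [F_free dense_H]]]]] := dense 1%R ltr01 (N + 3).
apply: F_free; apply: contains_F H3 _; first lia.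
have C_gt0 : 0 < 'C(n, 3) by rewrite bin_gt0; lia.
(* With eps = 1 the whole vertex set is admissible, so H has density at least d. *)
have := dense_H [set: 'I_n]; rewrite mul1r cardsT card_ord lexx => /(_ isT).
rewrite /induced_density cardsT card_ord ler_pdivlMr ?ltr0n //.
have -> : [set e in H | e \subset [set: 'I_n]] = H.
  by apply/setP => e; rewrite inE subsetT andbT.
move=> le_dC; rewrite -(ler_nat R) natrM; apply: le_trans (ler_wpM2l (ler0n _ _) le_dC).
by rewrite mulrA ler_peMl ?ler0n.
Qed.

Lemma ut_admissible0 (R : realType) m (F : hgraph m) :
  F != set0 -> ut_admissible F (0 : R).
Proof.
case/set0Pn => e F_e; split; first by rewrite lexx ler01.
move=> eps _ N; exists N, set0; split => //; split; first by move=> e'; rewrite inE.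
split; first by case=> f [_ /(_ e F_e)]; rewrite inE.
by move=> S _; rewrite /induced_density divr_ge0 ?ler0n.
Qed.

Lemma uniform_turan_density_eq0 (R : realType) m (F : hgraph m) :
  F != set0 -> zero_turan_density F -> uniform_turan_density R F = 0%R.
Proof.
move=> F_neq0 zero_F; rewrite /uniform_turan_density.
have -> : [set d : R | ut_admissible F d]%classic = [set 0%R]%classic.
  apply/seteqP; split => d /=; first exact: ut_admissible_eq0.
  by move=> ->; apply: ut_admissible0.
exact: sup1.
Qed.

Theorem proposition2p2 (R : realType) (l : nat) :
  (5 <= l)%N -> (3 %| l)%N -> uniform_turan_density R (tight_cycle l) = 0%R.
Proof.
move=> le5l /dvdnP[k def_l]; rewrite def_l.
apply: uniform_turan_density_eq0; last exact: zero_turan_density_tight_cycle.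
by apply: tight_cycle_neq0; rewrite -def_l; lia.
Qed.
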